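(* Let $a\ge0$ be real, let $A:=\frac{a+i}{a-i}$, and suppose $A$ is not a root of unity and $\liminf_{m\to\infty}|A^m-1|^{1/m}=0$. Let $0<R<\infty$. Then there exists $f\in A(B_R)$ such that the unique formal power series solution $u$ of the Goursat problem $\Delta u=f$, $y(x-ay)\mid u$ (i.e. $u=y(x-ay)q$ for a formal power series $q$) does not converge in any neighborhood of the origin. Specifically, one can take $f=\sum_{m\ge0}R^{-m}\bar z^m$ with $\bar z=x-iy$.
   Context: $\Delta$ is the Laplace operator on $\mathbb R^2$. $B_R=\{(x,y): x^2+y^2<R^2\}$ and $A(B_R)$ denotes the algebra of all $C^\infty$ functions $f:B_R\to\mathbb C$ such that for every compact $K\subset B_R$ the homogeneous Taylor series $\sum_m f_m$ of $f$ at $0$ converges absolutely and uniformly to $f$ on $K$. When $A$ is not a root of unity, the formal problem has a unique formal power series solution. *)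

From Stdlib Require Import Reals.
From Coquelicot Require Import Coquelicot.
Open Scope R_scope.

Notation CC := Complex.C.

(* A formal power series in the real variables x, y with complex
   coefficients: u i j is the coefficient of x^i y^j. *)
Definition fps := nat -> nat -> CC.

(* formal Laplacian: coefficient of x^i y^j in u_xx + u_yy *)
Definition flap (u : fps) : fps := fun i j =>
  (RtoC (INR ((i + 2) * (i + 1))) * u (i + 2)%nat j
   + RtoC (INR ((j + 2) * (j + 1))) * u i (j + 2)%nat)%C.

Definition mul_yxay (a : R) (q : fps) : fps := fun i j =>
  ((match i, j with S i', S j' => q i' j' | _, _ => 0%C end)
   - RtoC a * (match j with S (S j') => q i j' | _ => 0%C end))%C.

Definition goursat_sol (a : R) (f u : fps) : Prop :=
  (forall i j, flap u i j = f i j) /\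
  exists q : fps, forall i j, u i j = mul_yxay a q i j.

Definition hom (u : fps) (m : nat) (x y : R) : CC :=
  sum_n (fun i => (u i (m - i)%nat * pow_n (RtoC x) i
                   * pow_n (RtoC y) (m - i)%nat)%C) m.

Definition converges_near0 (u : fps) : Prop :=
  exists eps : R, 0 < eps /\
    forall x y : R, x ^ 2 + y ^ 2 < eps ^ 2 -> ex_series (fun m => hom u m x y).

(* Series part of membership in A(B_R): the homogeneous Taylor series
   converges absolutely and uniformly on every closed ball of radius r < R
   (Weierstrass M-test form; every compact K of B_R lies in such a ball). *)
Definition hom_series_unif_on_ball (Rr : R) (u : fps) : Prop :=
  forall r : R, 0 < r < Rr ->
    exists M : nat -> R, ex_series M /\
      forall m x y, x ^ 2 + y ^ 2 <= r ^ 2 -> Cmod (hom u m x y) <= M m.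

Definition Aof (a : R) : CC := ((RtoC a + Ci) / (RtoC a - Ci))%C.

Definition root_of_unity (z : CC) : Prop :=
  exists n : nat, (0 < n)%nat /\ pow_n z n = RtoC 1.

(* f = sum_m R^{-m} (x - i y)^m ; coefficient of x^i y^j is
   R^{-(i+j)} * binom(i+j, i) * (-i)^j  (binomial expansion) *)
Definition fcoef (Rr : R) : fps := fun i j =>
  (RtoC (/ Rr ^ (i + j) * Binomial.C (i + j) i) * pow_n (- Ci)%C j)%C.

From Stdlib Require Import Reals Factorial ZArith Lia Lra ClassicalEpsilon.
From Coquelicot Require Import Coquelicot.
Open Scope R_scope.

(* Write N = m + 2 and f_m = R^-m (x - i y)^m for the degree-m part of f; on the ball of
   radius r < R it is bounded by (r/R)^m, which gives f in A(B_R).  For a formal solution u,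
   the numbers H k = k! (N-k)! u_(k,N-k) satisfy H k + H (k+2) = -2 kappa_m i^k with
   |kappa_m| = m! / (2 R^m), so H k = kappa_m k i^k + lambda i^k + mu (-i)^k and
     N! u_N(x,y) = kappa_m N (i x) (i x + y)^(N-1) + lambda (i x + y)^N + mu (y - i x)^N.
   Divisibility by y fixes lambda; divisibility by x - a y, i.e. u_N(a,1) = 0, gives
     mu (-(1 + i a))^N (A^N - 1) = kappa_m N (1 + i a)^(N-1),
   and conversely these values of lambda and mu define a solution.  So |mu| is of size
   m! N / (R^m |A^N - 1|).  At (x,y) = t (cos phi, sin phi),
     N! u_N = O(|kappa_m| N t^N) + 2 i mu (-i t)^N sin (N phi),
   hence |u_N| >= 1 whenever sin (N phi) >= 1/2 and |A^N - 1| < (c t / R)^N for a suitable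
   constant c.  The liminf hypothesis gives infinitely many such N, and a nested sequence of
   arcs gives one angle phi with sin (N phi) >= 1/2 for infinitely many of them; so the
   homogeneous series of u diverges at points of every radius t > 0. *)

(** * Finite sums and the binomial theorem in C *)

(* Equalities between [sum_n] terms are stated in [AbelianMonoid.sort C_AbelianMonoid],
   where [ring] does not find the field structure of [C]. *)
Ltac ring_C := match goal with |- ?a = ?b => change (@eq CC a b); ring end.

Lemma pow_n_Cpow (c : CC) n : pow_n c n = (c ^ n)%C.
Proof. induction n as [|n IH]; simpl; rewrite ?IH; reflexivity. Qed.

Lemma sumC_O (a : nat -> CC) : sum_n a 0 = a 0%nat.
Proof. exact (sum_O a). Qed.

Lemma sumC_Sn (a : nat -> CC) n : sum_n a (S n) = (sum_n a n + a (S n))%C.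
Proof. exact (sum_Sn a n). Qed.

Lemma sumC_shift (a : nat -> CC) n :
  sum_n a (S n) = (a 0%nat + sum_n (fun k => a (S k)) n)%C.
Proof.
  induction n as [|n IH]; rewrite sumC_Sn; [rewrite !sumC_O; reflexivity|].
  rewrite IH, sumC_Sn. ring_C.
Qed.

Lemma sumC_plus (a b : nat -> CC) n :
  sum_n (fun k => a k + b k)%C n = (sum_n a n + sum_n b n)%C.
Proof. exact (sum_n_plus a b n). Qed.

Lemma sumC_mult_l (c : CC) (a : nat -> CC) n :
  sum_n (fun k => c * a k)%C n = (c * sum_n a n)%C.
Proof. exact (@sum_n_mult_l C_Ring c a n). Qed.

Lemma sumC_telescope (b : nat -> CC) n :
  sum_n (fun k => b k - b (S k))%C n = (b 0%nat - b (S n))%C.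
Proof.
  induction n as [|n IH]; [rewrite sumC_O; reflexivity|].
  rewrite sumC_Sn, IH. ring_C.
Qed.

(* Pascal's triangle, so that [binom n k = 0] for [k > n]. *)
Fixpoint binom (n k : nat) : R :=
  match n, k with
  | _, O => 1
  | O, S _ => 0
  | S n', S k' => binom n' k' + binom n' (S k')
  end.

Lemma binom_n_0 n : binom n 0 = 1.
Proof. destruct n; reflexivity. Qed.

Lemma binom_gt n k : (n < k)%nat -> binom n k = 0.
Proof.
  revert k; induction n as [|n IH]; intros [|k] Hk; try lia; simpl; [easy|].
  rewrite !IH by lia. lra.
Qed.

Lemma binom_C n k : (k <= n)%nat -> binom n k = Binomial.C n k.
Proof.
  revert k; induction n as [|n IH]; intros [|k] Hk; simpl; try rewrite C_n_0; try lia; auto.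
  destruct (Nat.eq_dec k n) as [->|Hkn].
  - rewrite (binom_gt n (S n)), IH, !C_n_n by lia. lra.
  - rewrite !IH by lia. apply pascal. lia.
Qed.

Lemma binom_fact n k : (k <= n)%nat ->
  binom n k * INR (fact k) * INR (fact (n - k)) = INR (fact n).
Proof.
  intros Hk. rewrite binom_C by exact Hk. unfold Binomial.C.
  field. split; apply INR_fact_neq_0.
Qed.

Lemma binom_S_mul n k : binom (S n) (S k) * INR (S k) = INR (S n) * binom n k.
Proof.
  destruct (Compare_dec.le_lt_dec k n) as [Hk|Hk]; [|rewrite !binom_gt by lia; lra].
  rewrite !binom_C by lia. unfold Binomial.C.
  replace (S n - S k)%nat with (n - k)%nat by lia.
  change (fact (S n)) with (S n * fact n)%nat. change (fact (S k)) with (S k * fact k)%nat.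
  rewrite !mult_INR. field.
  repeat split; try apply INR_fact_neq_0. apply not_0_INR. lia.
Qed.

Lemma Cbinomial (x y : CC) n :
  sum_n (fun k => RtoC (binom n k) * x ^ k * y ^ (n - k))%C n = ((x + y) ^ n)%C.
Proof.
  induction n as [|n IH]; [rewrite sumC_O; simpl; ring_C|].
  assert (Hx : sum_n (fun k => RtoC (binom n k) * x ^ (S k) * y ^ (n - k))%C n
           = (x * (x + y) ^ n)%C).
  { rewrite <- IH, <- sumC_mult_l. apply sum_n_ext_loc. intros k _. simpl. ring_C. }
  assert (Hy : sum_n (fun k => RtoC (binom n k) * x ^ k * y ^ (S n - k))%C (S n)
           = (y * (x + y) ^ n)%C).
  { rewrite <- IH, <- sumC_mult_l, sumC_Sn, binom_gt by lia.
    rewrite Cmult_0_l, !Cmult_0_l, Cplus_0_r.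
    apply sum_n_ext_loc. intros k Hk. replace (S n - k)%nat with (S (n - k)) by lia.
    simpl. ring_C. }
  rewrite sumC_shift in Hy |- *. cbn [binom Nat.sub] in Hy |- *.
  transitivity (x * (x + y) ^ n + y * (x + y) ^ n)%C; [|simpl; ring_C].
  rewrite <- Hx, <- Hy, binom_n_0.
  rewrite (sum_n_ext_loc _ (fun k => RtoC (binom n k) * x ^ S k * y ^ (n - k)
      + RtoC (binom n (S k)) * x ^ S k * y ^ (n - k))%C).
  2:{ intros k _. rewrite RtoC_plus. ring_C. }
  rewrite sumC_plus. ring_C.
Qed.

Lemma Cbinomial_weighted (x y : CC) n :
  sum_n (fun k => RtoC (binom (S n) k * INR k) * x ^ k * y ^ (S n - k))%C (S n)
  = (RtoC (INR (S n)) * x * (x + y) ^ n)%C.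
Proof.
  rewrite sumC_shift, Rmult_0_r, <- Cbinomial, <- sumC_mult_l.
  rewrite !Cmult_0_l, Cplus_0_l.
  apply sum_n_ext_loc. intros k _. rewrite binom_S_mul, RtoC_mult. simpl. ring_C.
Qed.

Lemma Ci_sqr : (Ci * Ci = - (1))%C.
Proof. apply injective_projections; simpl; ring. Qed.

Lemma Ci_pow_SS k : (Ci ^ (S (S k)) = - Ci ^ k)%C.
Proof. simpl. rewrite Cmult_assoc, Ci_sqr. ring_C. Qed.

Lemma Copp_pow (z : CC) n : ((- z) ^ n = (- (1)) ^ n * z ^ n)%C.
Proof. rewrite <- Cpow_mult_l. f_equal. ring_C. Qed.

Lemma Ci_opp_pow_SS k : ((- Ci) ^ (S (S k)) = - (- Ci) ^ k)%C.
Proof. rewrite !(Copp_pow Ci), Ci_pow_SS. simpl. ring_C. Qed.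

Lemma Ci_opp_pow_mul k : ((- Ci) ^ k * Ci ^ k = 1)%C.
Proof.
  rewrite <- Cpow_mult_l, <- Cpow_1_l with k. f_equal.
  apply injective_projections; simpl; ring.
Qed.

(** * The two-step recurrence *)

(* The general solution of [h k + h (k + 2) = -2 ka i^k]. *)
Definition hsol (ka la mu : CC) (k : nat) : CC :=
  (ka * RtoC (INR k) * Ci ^ k + la * Ci ^ k + mu * (- Ci) ^ k)%C.

Lemma hsol_rec ka la mu k :
  (hsol ka la mu k + hsol ka la mu (S (S k)) = - (2) * ka * Ci ^ k)%C.
Proof.
  unfold hsol. rewrite Ci_pow_SS, Ci_opp_pow_SS, !S_INR, !RtoC_plus. ring_C.
Qed.

Lemma hsol_of_rec (G : nat -> CC) (ka : CC) m :
  (forall i, (i <= m)%nat -> (G i + G (S (S i)) = - (2) * ka * Ci ^ i)%C) ->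
  exists la mu, forall k, (k <= S (S m))%nat -> G k = hsol ka la mu k.
Proof.
  intros Hrec.
  set (la := ((G 0%nat - Ci * G 1%nat - ka) / 2)%C).
  set (mu := ((G 0%nat + Ci * G 1%nat + ka) / 2)%C).
  exists la, mu. set (h := hsol ka la mu).
  assert (Hpair : forall k, (S k <= S (S m))%nat -> G k = h k /\ G (S k) = h (S k)).
  { induction k as [|k IH]; intros Hk.
    - unfold h, hsol, la, mu. simpl. split; [field|].
      transitivity (- (Ci * Ci) * G 1%nat)%C; [rewrite Ci_sqr; ring_C | field].
    - destruct IH as [H0 H1]; [lia|]. split; [exact H1|].
      assert (E := Hrec k ltac:(lia)). rewrite H0 in E.
      replace (G (S (S k))) with (- (2) * ka * Ci ^ k - h k)%C by (rewrite <- E; ring_C).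
      unfold h. rewrite <- (hsol_rec ka la mu k). ring_C. }
  intros [|k] Hk; apply Hpair; lia.
Qed.

Lemma hsol_sum ka la mu (x y : CC) n :
  sum_n (fun k => RtoC (binom (S n) k) * hsol ka la mu k * x ^ k * y ^ (S n - k))%C (S n)
  = (ka * RtoC (INR (S n)) * (Ci * x) * (Ci * x + y) ^ n
     + la * (Ci * x + y) ^ (S n) + mu * (- Ci * x + y) ^ (S n))%C.
Proof.
  rewrite <- (Cbinomial (Ci * x) y (S n)), <- (Cbinomial (- Ci * x) y (S n)).
  replace (ka * RtoC (INR (S n)) * (Ci * x) * (Ci * x + y) ^ n)%C
    with (ka * (RtoC (INR (S n)) * (Ci * x) * (Ci * x + y) ^ n))%C by ring_C.
  rewrite <- Cbinomial_weighted, <- !sumC_mult_l, <- !sumC_plus.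
  apply sum_n_ext_loc. intros k _. unfold hsol. rewrite !Cpow_mult_l, RtoC_mult. ring_C.
Qed.

Definition lam_top (ka mu : CC) (n : nat) : CC :=
  (- ka * RtoC (INR n) - mu * (- (1)) ^ n)%C.

Lemma hsol_top_eq0 ka la mu n : hsol ka la mu n = 0%C <-> la = lam_top ka mu n.
Proof.
  assert (Hi : (Ci ^ n)%C <> 0%C) by (apply Cpow_nz, Ci_nz).
  assert (E : hsol ka la mu n = ((la - lam_top ka mu n) * Ci ^ n)%C).
  { unfold hsol, lam_top. rewrite Copp_pow. ring_C. }
  rewrite E. split; intros H.
  - apply Ceq_minus.
    transitivity ((la - lam_top ka mu n) * Ci ^ n / Ci ^ n)%C; [field; exact Hi|].
    rewrite H. unfold Cdiv. ring_C.
  - rewrite H. ring_C.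
Qed.

Lemma hsol_sum_top ka mu (x y : CC) n :
  sum_n (fun k => RtoC (binom (S n) k) * hsol ka (lam_top ka mu (S n)) mu k
                  * x ^ k * y ^ (S n - k))%C (S n)
  = (- ka * RtoC (INR (S n)) * y * (Ci * x + y) ^ n
     + mu * ((- Ci * x + y) ^ (S n) - (- (Ci * x + y)) ^ (S n)))%C.
Proof.
  rewrite hsol_sum. unfold lam_top. rewrite (Copp_pow (Ci * x + y)). simpl. ring_C.
Qed.

(** * Degree parts of formal solutions *)

(* [deriv0 u n k] is the derivative [d_x^k d_y^(n-k) u] at the origin. *)
Definition deriv0 (u : fps) (n k : nat) : CC :=
  (RtoC (INR (fact k) * INR (fact (n - k))) * u k (n - k)%nat)%C.

Lemma hom_Cpow u n x y :
  hom u n x y = sum_n (fun k => u k (n - k)%nat * RtoC x ^ k * RtoC y ^ (n - k))%C n.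
Proof.
  apply sum_n_ext_loc. intros k _. rewrite (pow_n_Cpow (RtoC x)), (pow_n_Cpow (RtoC y)).
  reflexivity.
Qed.

Lemma fact_hom u n x y :
  (RtoC (INR (fact n)) * hom u n x y)%C =
  sum_n (fun k => RtoC (binom n k) * deriv0 u n k * RtoC x ^ k * RtoC y ^ (n - k))%C n.
Proof.
  rewrite hom_Cpow, <- sumC_mult_l. apply sum_n_ext_loc. intros k Hk.
  rewrite <- (binom_fact n k Hk). unfold deriv0. rewrite !RtoC_mult. ring_C.
Qed.

Lemma deriv0_flap u i j :
  (deriv0 u (S (S (i + j))) i + deriv0 u (S (S (i + j))) (S (S i))
   = RtoC (INR (fact i) * INR (fact j)) * flap u i j)%C.
Proof.
  unfold deriv0, flap.
  replace (S (S (i + j)) - i)%nat with (j + 2)%nat by lia.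
  replace (S (S (i + j)) - S (S i))%nat with j by lia.
  replace (i + 2)%nat with (S (S i)) by lia.
  replace (j + 2)%nat with (S (S j)) by lia.
  replace (i + 1)%nat with (S i) by lia. replace (j + 1)%nat with (S j) by lia.
  change (fact (S (S i))) with (S (S i) * (S i * fact i))%nat.
  change (fact (S (S j))) with (S (S j) * (S j * fact j))%nat.
  rewrite !mult_INR, !RtoC_mult. ring_C.
Qed.

Definition kappa (Rr : R) (m : nat) : CC :=
  (RtoC (- (INR (fact m) / (2 * Rr ^ m))) * (- Ci) ^ m)%C.

Lemma Cmod_kappa Rr m : 0 < Rr -> Cmod (kappa Rr m) = INR (fact m) / (2 * Rr ^ m).
Proof.
  intros HR. unfold kappa.
  rewrite Cmod_mult, Cmod_pow, Cmod_opp, Cmod_Ci, pow1, Cmod_R, Rmult_1_r.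
  rewrite Rabs_Ropp, Rabs_pos_eq; [reflexivity|].
  apply Rdiv_le_0_compat; [apply pos_INR|]. assert (0 < Rr ^ m) by (apply pow_lt; exact HR). lra.
Qed.

Lemma fact_fcoef Rr i j : Rr <> 0 ->
  (RtoC (INR (fact i) * INR (fact j)) * fcoef Rr i j = - (2) * kappa Rr (i + j) * Ci ^ i)%C.
Proof.
  intros HR. unfold fcoef, kappa. rewrite pow_n_Cpow, Cpow_add_r.
  assert (HRn : Rr ^ (i + j) <> 0) by (apply pow_nonzero; exact HR).
  assert (E1 : INR (fact i) * INR (fact j) * (/ Rr ^ (i + j) * Binomial.C (i + j) i)
               = INR (fact (i + j)) / Rr ^ (i + j)).
  { unfold Binomial.C. replace (i + j - i)%nat with j by lia.
    field. repeat split; auto; apply INR_fact_neq_0. }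
  assert (E2 : (- (2) * RtoC (- (INR (fact (i + j)) / (2 * Rr ^ (i + j))))
                = RtoC (INR (fact (i + j)) / Rr ^ (i + j)))%C).
  { rewrite <- RtoC_opp, <- RtoC_mult. f_equal. field. exact HRn. }
  transitivity (RtoC (INR (fact i) * INR (fact j) * (/ Rr ^ (i + j) * Binomial.C (i + j) i))
                * (- Ci) ^ j)%C; [rewrite !RtoC_mult; ring_C|].
  rewrite E1, <- E2.
  transitivity (- (2) * RtoC (- (INR (fact (i + j)) / (2 * Rr ^ (i + j)))) * (- Ci) ^ j
                * ((- Ci) ^ i * Ci ^ i))%C; [rewrite Ci_opp_pow_mul|]; ring_C.
Qed.

Definition pa (a : R) : CC := (Ci * RtoC a + 1)%C.

Lemma pa_conj_Aof a : (- Ci * RtoC a + 1 = - pa a * Aof a)%C.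
Proof.
  assert (Hd : (RtoC a - Ci)%C <> 0%C).
  { intros E. apply (f_equal snd) in E. simpl in E. lra. }
  assert (E : ((- Ci * RtoC a + 1) * (RtoC a - Ci) = - pa a * (RtoC a + Ci))%C).
  { apply injective_projections; simpl; ring. }
  transitivity ((- Ci * RtoC a + 1) * (RtoC a - Ci) / (RtoC a - Ci))%C; [field; exact Hd|].
  rewrite E. unfold Aof. field. exact Hd.
Qed.

Lemma Cmod_pa_ge1 a : 1 <= Cmod (pa a).
Proof.
  eapply Rle_trans; [|apply re_le_Cmod]. simpl. rewrite Rabs_pos_eq; lra.
Qed.

Lemma hsol_sum_root ka mu a n :
  sum_n (fun k => RtoC (binom (S n) k) * hsol ka (lam_top ka mu (S n)) mu k
                  * RtoC a ^ k * RtoC 1 ^ (S n - k))%C (S n)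
  = (mu * (- pa a) ^ S n * (Aof a ^ S n - 1) - ka * RtoC (INR (S n)) * pa a ^ n)%C.
Proof.
  rewrite hsol_sum_top, pa_conj_Aof. fold (pa a).
  rewrite Cpow_mult_l. ring_C.
Qed.

Lemma mul_yxay_y0 a q i : mul_yxay a q i 0%nat = 0%C.
Proof. unfold mul_yxay. destruct i; ring_C. Qed.

Lemma hom_mul_yxay_root a q n : hom (mul_yxay a q) n a 1 = 0%C.
Proof.
  set (b := fun k => (RtoC a ^ k * match k, (n - k)%nat with
                                   | S i, S j => q i j | _, _ => 0%C end)%C).
  transitivity (sum_n (fun k => b k - b (S k))%C n).
  - rewrite hom_Cpow. apply sum_n_ext_loc. intros k Hk.
    rewrite Cpow_1_l. unfold mul_yxay, b.
    destruct k as [|k]; rewrite ?Nat.sub_succ_r, ?Nat.sub_0_r.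
    + destruct n as [|[|n]]; simpl; ring_C.
    + destruct (n - k)%nat as [|[|[|d]]]; simpl; ring_C.
  - rewrite sumC_telescope. unfold b. rewrite Nat.sub_succ_r, Nat.sub_diag. simpl. ring_C.
Qed.

(* Coefficient [(k, m)] of the quotient of [u] by [y (x - a y)], computed column by column. *)
Fixpoint quot_yxay (a : R) (u : fps) (k m : nat) {struct m} : CC :=
  match m with
  | O => u (S k) 1%nat
  | S m' => (u (S k) (S (S m')) + RtoC a * quot_yxay a u (S k) m')%C
  end.

Lemma quot_yxay_sum a u m k :
  quot_yxay a u k m = sum_n (fun l => RtoC a ^ l * u (S k + l)%nat (S m - l)%nat)%C m.
Proof.
  revert k; induction m as [|m IH]; intros k.
  - rewrite sumC_O, Nat.add_0_r. simpl. ring_C.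
  - cbn [quot_yxay]. rewrite IH, sumC_shift, Nat.add_0_r, <- sumC_mult_l.
    f_equal; [simpl; ring_C|].
    apply sum_n_ext_loc. intros l _.
    replace (S k + S l)%nat with (S (S k) + l)%nat by lia. simpl. ring_C.
Qed.

Lemma hom_root_split u a m :
  hom u (S (S m)) a 1 = (u 0%nat (S (S m)) + RtoC a * quot_yxay a u 0 m
                         + RtoC a ^ S (S m) * u (S (S m)) 0%nat)%C.
Proof.
  rewrite quot_yxay_sum, <- sumC_mult_l, hom_Cpow, sumC_shift, sumC_Sn.
  rewrite Nat.sub_diag, Nat.sub_0_r, !Cpow_1_l, Cplus_assoc.
  f_equal; [f_equal| ring_C]; [simpl; ring_C|].
  apply sum_n_ext_loc. intros l _. rewrite Cpow_1_l. simpl. ring_C.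
Qed.

Lemma mul_yxay_of_roots (a : R) (u : fps) :
  (forall i, u i 0%nat = 0%C) -> (forall n, hom u n a 1 = 0%C) ->
  exists q, forall i j, u i j = mul_yxay a q i j.
Proof.
  intros Hy Hroot. exists (quot_yxay a u). intros i j. unfold mul_yxay.
  destruct j as [|[|j]]; [rewrite Hy; destruct i; ring_C| |].
  - destruct i as [|i]; [|simpl; ring_C].
    specialize (Hroot 1%nat). rewrite hom_Cpow, sumC_Sn, sumC_O, Hy in Hroot. simpl in Hroot.
    assert (H01 : u 0%nat 1%nat = 0%C) by (rewrite <- Hroot; ring_C).
    rewrite H01. ring_C.
  - destruct i as [|i]; [|simpl; ring_C].
    assert (E := hom_root_split u a j). rewrite Hroot, Hy in E.
    transitivity (u 0%nat (S (S j)) + RtoC a * quot_yxay a u 0 j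
                  + RtoC a ^ S (S j) * 0 - RtoC a * quot_yxay a u 0 j)%C; [ring_C|].
    rewrite <- E. ring_C.
Qed.

Lemma Cmult_reg_l (z x y : CC) : z <> 0%C -> (z * x = z * y)%C -> x = y.
Proof.
  intros Hz E. transitivity (/ z * (z * x))%C; [field; exact Hz|].
  rewrite E. field. exact Hz.
Qed.

Lemma fact_prod_neq0 i j : RtoC (INR (fact i) * INR (fact j)) <> 0%C.
Proof.
  intros E. apply (f_equal fst) in E. simpl in E.
  apply Rmult_integral in E as [E|E]; exact (INR_fact_neq_0 _ E).
Qed.

Lemma Aof_pow_sub1_neq0 a n : ~ root_of_unity (Aof a) -> (0 < n)%nat ->
  (Aof a ^ n - 1)%C <> 0%C.
Proof.
  intros hA Hn E. apply hA. exists n. split; [exact Hn|].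
  rewrite pow_n_Cpow. apply Ceq_minus. exact E.
Qed.

Lemma deriv0_rec Rr u m i : Rr <> 0 -> (forall i j, flap u i j = fcoef Rr i j) ->
  (i <= m)%nat ->
  (deriv0 u (S (S m)) i + deriv0 u (S (S m)) (S (S i)) = - (2) * kappa Rr m * Ci ^ i)%C.
Proof.
  intros HR Hf Hi. replace m with (i + (m - i))%nat by lia.
  rewrite deriv0_flap, Hf. apply fact_fcoef. exact HR.
Qed.

(* [y | u] fixes [lambda] and [(x - a y) | u] fixes [mu]. *)
Lemma goursat_sol_deriv0 a Rr u m : Rr <> 0 -> goursat_sol a (fcoef Rr) u ->
  let ka := kappa Rr m in
  exists mu,
    (forall k, (k <= S (S m))%nat ->
       deriv0 u (S (S m)) k = hsol ka (lam_top ka mu (S (S m))) mu k) /\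
    (mu * (- pa a) ^ S (S m) * (Aof a ^ S (S m) - 1) = ka * RtoC (INR (S (S m))) * pa a ^ S m)%C.
Proof.
  intros HR [Hf [q Hq]] ka.
  destruct (hsol_of_rec (deriv0 u (S (S m))) ka m (fun i => deriv0_rec Rr u m i HR Hf))
    as [la [mu Hh]].
  assert (Hla : la = lam_top ka mu (S (S m))).
  { apply hsol_top_eq0. rewrite <- Hh by lia.
    unfold deriv0. rewrite Nat.sub_diag, Hq, mul_yxay_y0. ring_C. }
  subst la. exists mu. split; [exact Hh|].
  assert (Hroot : hom u (S (S m)) a 1 = 0%C).
  { rewrite <- (hom_mul_yxay_root a q (S (S m))).
    apply sum_n_ext_loc. intros k _. rewrite Hq. reflexivity. }
  assert (E := fact_hom u (S (S m)) a 1).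
  rewrite Hroot, (sum_n_ext_loc _ (fun k => RtoC (binom (S (S m)) k)
     * hsol ka (lam_top ka mu (S (S m))) mu k * RtoC a ^ k * RtoC 1 ^ (S (S m) - k))%C)
    in E by (intros k Hk; rewrite Hh by exact Hk; reflexivity).
  rewrite hsol_sum_root in E. apply Ceq_minus. rewrite <- E. ring_C.
Qed.

Definition mu_sol (a Rr : R) (m : nat) : CC :=
  (kappa Rr m * RtoC (INR (S (S m))) * pa a ^ S m
   / ((- pa a) ^ S (S m) * (Aof a ^ S (S m) - 1)))%C.

Definition deriv_sol (a Rr : R) (m : nat) : nat -> CC :=
  hsol (kappa Rr m) (lam_top (kappa Rr m) (mu_sol a Rr m) (S (S m))) (mu_sol a Rr m).

Definition u_sol (a Rr : R) : fps := fun i j =>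
  match (i + j)%nat with
  | S (S m) => (deriv_sol a Rr m i / RtoC (INR (fact i) * INR (fact j)))%C
  | _ => 0%C
  end.

Lemma deriv0_u_sol a Rr m k : (k <= S (S m))%nat ->
  deriv0 (u_sol a Rr) (S (S m)) k = deriv_sol a Rr m k.
Proof.
  intros Hk. unfold deriv0, u_sol. replace (k + (S (S m) - k))%nat with (S (S m)) by lia.
  field. apply fact_prod_neq0.
Qed.

Lemma flap_u_sol a Rr i j : Rr <> 0 -> flap (u_sol a Rr) i j = fcoef Rr i j.
Proof.
  intros HR. apply (Cmult_reg_l _ _ _ (fact_prod_neq0 i j)).
  rewrite <- deriv0_flap, fact_fcoef, !deriv0_u_sol by (exact HR || lia).
  apply hsol_rec.
Qed.

Lemma u_sol_y0 a Rr i : u_sol a Rr i 0%nat = 0%C.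
Proof.
  unfold u_sol. rewrite Nat.add_0_r. destruct i as [|[|m]]; [reflexivity|reflexivity|].
  assert (E : deriv_sol a Rr m (S (S m)) = 0%C) by (apply hsol_top_eq0; reflexivity).
  rewrite E. unfold Cdiv. ring_C.
Qed.

Lemma hom_u_sol_root a Rr n : ~ root_of_unity (Aof a) -> hom (u_sol a Rr) n a 1 = 0%C.
Proof.
  intros hA. destruct n as [|[|m]].
  - rewrite hom_Cpow, sumC_O. unfold u_sol. simpl. ring_C.
  - rewrite hom_Cpow, sumC_Sn, sumC_O. unfold u_sol. simpl. ring_C.
  - apply (Cmult_reg_l (RtoC (INR (fact (S (S m)))))).
    { intros E. apply (f_equal fst) in E. exact (INR_fact_neq_0 _ E). }
    rewrite fact_hom, (sum_n_ext_loc _ (fun k => RtoC (binom (S (S m)) k)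
      * deriv_sol a Rr m k * RtoC a ^ k * RtoC 1 ^ (S (S m) - k))%C)
      by (intros k Hk; rewrite deriv0_u_sol by exact Hk; reflexivity).
    unfold deriv_sol. rewrite hsol_sum_root. unfold mu_sol. field. split.
    + apply Aof_pow_sub1_neq0; [exact hA | lia].
    + apply Cpow_nz. intros E. assert (H1 := Cmod_pa_ge1 a).
      rewrite <- Cmod_opp, E, Cmod_0 in H1. lra.
Qed.

Lemma goursat_sol_u_sol a Rr : Rr <> 0 -> ~ root_of_unity (Aof a) ->
  goursat_sol a (fcoef Rr) (u_sol a Rr).
Proof.
  intros HR hA. split.
  - intros i j. apply flap_u_sol. exact HR.
  - apply mul_yxay_of_roots; intros; [apply u_sol_y0 | apply hom_u_sol_root; exact hA].
Qed.

(** * The right-hand side lies in A(B_R) *)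

Lemma hom_fcoef Rr m x y :
  hom (fcoef Rr) m x y = (RtoC (/ Rr ^ m) * (RtoC x + - Ci * RtoC y) ^ m)%C.
Proof.
  rewrite hom_Cpow, <- Cbinomial, <- sumC_mult_l. apply sum_n_ext_loc. intros i Hi.
  unfold fcoef. replace (i + (m - i))%nat with m by lia.
  rewrite binom_C, pow_n_Cpow, Cpow_mult_l, !RtoC_mult by exact Hi. ring_C.
Qed.

Lemma Cmod_x_sub_iy x y : Cmod (RtoC x + - Ci * RtoC y) = sqrt (x ^ 2 + y ^ 2).
Proof. unfold Cmod. f_equal. simpl. ring. Qed.

Lemma fcoef_unif_on_ball Rr : 0 < Rr -> hom_series_unif_on_ball Rr (fcoef Rr).
Proof.
  intros HR r [Hr0 HrR]. exists (fun m => (r / Rr) ^ m). split.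
  - apply ex_series_geom. rewrite Rabs_pos_eq by (apply Rlt_le, Rdiv_lt_0_compat; lra).
    apply (Rdiv_lt_1 r Rr HR). exact HrR.
  - intros m x y Hxy.
    rewrite hom_fcoef, Cmod_mult, Cmod_R, Cmod_pow, Cmod_x_sub_iy, Rabs_pos_eq.
    2:{ apply Rlt_le, Rinv_0_lt_compat, pow_lt. exact HR. }
    assert (Hs : sqrt (x ^ 2 + y ^ 2) <= r).
    { rewrite <- (sqrt_pow2 r) by lra. apply sqrt_le_1_alt. exact Hxy. }
    unfold Rdiv. rewrite Rpow_mult_distr, pow_inv, Rmult_comm.
    apply Rmult_le_compat_r; [apply Rlt_le, Rinv_0_lt_compat, pow_lt; exact HR|].
    apply pow_incr. split; [apply sqrt_pos | exact Hs].
Qed.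

(** * Lower bound on a circle *)

Lemma Cpow_cis phi n :
  (((cos phi, sin phi) : CC) ^ n)%C = ((cos (INR n * phi), sin (INR n * phi)) : CC).
Proof.
  induction n as [|n IH].
  - simpl. rewrite Rmult_0_l, cos_0, sin_0. reflexivity.
  - rewrite Cpow_S, IH, S_INR, Rmult_plus_distr_r, Rmult_1_l, Rplus_comm, cos_plus, sin_plus.
    apply injective_projections; simpl; ring.
Qed.

Lemma Cmod_polar t phi : 0 <= t ->
  Cmod (Ci * RtoC (t * cos phi) + RtoC (t * sin phi)) = t.
Proof.
  intros Ht. unfold Cmod. transitivity (sqrt (t ^ 2)); [f_equal | exact (sqrt_pow2 t Ht)].
  assert (H := sin2_cos2 phi). unfold Rsqr in H. simpl.
  transitivity (t * t * (sin phi * sin phi + cos phi * cos phi)); [ring | rewrite H; ring].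
Qed.

(* For [(x, y) = t (cos phi, sin phi)]: [y - i x = -i t e^(i phi)], [-(y + i x) = -i t e^(-i phi)]. *)
Lemma polar_pow_diff t phi n :
  ((- Ci * RtoC (t * cos phi) + RtoC (t * sin phi)) ^ n
   - (- (Ci * RtoC (t * cos phi) + RtoC (t * sin phi))) ^ n
   = (- Ci) ^ n * RtoC t ^ n * (@pair R R 0 (2 * sin (INR n * phi))%R))%C.
Proof.
  replace (- Ci * RtoC (t * cos phi) + RtoC (t * sin phi))%C
    with (- Ci * (RtoC t * (cos phi, sin phi)))%C
    by (apply injective_projections; simpl; ring).
  replace (- (Ci * RtoC (t * cos phi) + RtoC (t * sin phi)))%C
    with (- Ci * (RtoC t * (cos (- phi), sin (- phi))))%C
    by (rewrite cos_neg, sin_neg; apply injective_projections; simpl; ring).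
  rewrite !Cpow_mult_l, !Cpow_cis, <- Ropp_mult_distr_r, cos_neg, sin_neg.
  transitivity ((- Ci) ^ n * RtoC t ^ n *
    (@pair R R (cos (INR n * phi)) (sin (INR n * phi))
     - @pair R R (cos (INR n * phi)) (- sin (INR n * phi))%R))%C; [ring_C|].
  f_equal. apply injective_projections; simpl; ring.
Qed.

Lemma fact_hom_polar a Rr u m t phi : Rr <> 0 -> goursat_sol a (fcoef Rr) u ->
  let ka := kappa Rr m in
  exists mu,
    (mu * (- pa a) ^ S (S m) * (Aof a ^ S (S m) - 1) = ka * RtoC (INR (S (S m))) * pa a ^ S m)%C
    /\ (RtoC (INR (fact (S (S m)))) * hom u (S (S m)) (t * cos phi) (t * sin phi)
        = - ka * RtoC (INR (S (S m))) * RtoC (t * sin phi)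
            * (Ci * RtoC (t * cos phi) + RtoC (t * sin phi)) ^ S m
          + mu * ((- Ci) ^ S (S m) * RtoC t ^ S (S m)
                  * (@pair R R 0 (2 * sin (INR (S (S m)) * phi))%R)))%C.
Proof.
  intros HR Hu ka. destruct (goursat_sol_deriv0 a Rr u m HR Hu) as [mu [Hh Hmu]].
  exists mu. split; [exact Hmu|].
  rewrite fact_hom, (sum_n_ext_loc _ (fun k => RtoC (binom (S (S m)) k)
      * hsol ka (lam_top ka mu (S (S m))) mu k
      * RtoC (t * cos phi) ^ k * RtoC (t * sin phi) ^ (S (S m) - k))%C)
    by (intros k Hk; rewrite Hh by exact Hk; reflexivity).
  rewrite hsol_sum_top, polar_pow_diff. reflexivity.
Qed.

Lemma Cmod_imag b : Cmod (@pair R R 0 b) = Rabs b.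
Proof.
  unfold Cmod. simpl. rewrite <- sqrt_Rsqr_abs. f_equal. unfold Rsqr. ring.
Qed.

Lemma Cmod_mu_relation a Rr m mu : 0 < Rr ->
  (mu * (- pa a) ^ S (S m) * (Aof a ^ S (S m) - 1)
   = kappa Rr m * RtoC (INR (S (S m))) * pa a ^ S m)%C ->
  Cmod mu * Cmod (pa a) * Cmod (Aof a ^ S (S m) - 1)%C
  = INR (fact m) / (2 * Rr ^ m) * INR (S (S m)).
Proof.
  intros HR Hmu. apply (f_equal Cmod) in Hmu.
  rewrite !Cmod_mult, !Cmod_pow, Cmod_opp, Cmod_kappa, Cmod_R, Rabs_pos_eq in Hmu
    by (exact HR || apply pos_INR).
  assert (Hp : 0 < Cmod (pa a) ^ S m) by (apply pow_lt; generalize (Cmod_pa_ge1 a); lra).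
  apply (Rmult_eq_reg_r (Cmod (pa a) ^ S m)); [|lra].
  rewrite <- Hmu. simpl. ring.
Qed.

Lemma fact_hom_polar_ge a Rr u m t phi : 0 < Rr -> 0 < t -> goursat_sol a (fcoef Rr) u ->
  1 / 2 <= sin (INR (S (S m)) * phi) ->
  let N := S (S m) in
  let K := INR (fact m) / (2 * Rr ^ m) in
  exists M, 0 <= M /\ M * Cmod (pa a) * Cmod (Aof a ^ N - 1)%C = K * INR N /\
    (M - K * INR N) * t ^ N <= INR (fact N) * Cmod (hom u N (t * cos phi) (t * sin phi)).
Proof.
  intros HR Ht Hu Hsin N K.
  destruct (fact_hom_polar a Rr u m t phi (Rgt_not_eq _ _ HR) Hu) as [mu [Hmu E]].
  exists (Cmod mu). split; [apply Cmod_ge_0|]. split; [exact (Cmod_mu_relation a Rr m mu HR Hmu)|].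
  fold N in E, Hsin.
  rewrite <- (Rabs_pos_eq (INR (fact N))) by apply pos_INR.
  rewrite <- Cmod_R, <- Cmod_mult, E.
  set (X := (- kappa Rr m * RtoC (INR N) * RtoC (t * sin phi)
             * (Ci * RtoC (t * cos phi) + RtoC (t * sin phi)) ^ S m)%C).
  set (Y := (mu * ((- Ci) ^ N * RtoC t ^ N * @pair R R 0 (2 * sin (INR N * phi))%R))%C).
  assert (HtN : 0 <= t ^ N) by (apply pow_le; lra).
  assert (HX : Cmod X <= K * INR N * t ^ N).
  { unfold X. rewrite !Cmod_mult, Cmod_opp, Cmod_kappa, Cmod_pow, Cmod_polar, !Cmod_R by lra.
    fold K. rewrite (Rabs_pos_eq (INR N)) by apply pos_INR.
    assert (Hsin1 : Rabs (t * sin phi) <= t).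
    { rewrite Rabs_mult, (Rabs_pos_eq t) by lra.
      assert (Rabs (sin phi) <= 1) by (apply Rabs_le, SIN_bound). nra. }
    assert (0 <= K * INR N).
    { apply Rmult_le_pos; [apply Rdiv_le_0_compat; [apply pos_INR|] | apply pos_INR].
      assert (0 < Rr ^ m) by (apply pow_lt; exact HR). lra. }
    change (t ^ N) with (t * t ^ S m).
    rewrite <- Rmult_assoc. apply Rmult_le_compat_r; [apply pow_le; lra|].
    apply Rmult_le_compat_l; assumption. }
  assert (HY : Cmod mu * t ^ N <= Cmod Y).
  { unfold Y. rewrite !Cmod_mult, Cmod_pow, Cmod_opp, Cmod_Ci, pow1, Cmod_pow, Cmod_R.
    rewrite Cmod_imag, (Rabs_pos_eq t), (Rabs_pos_eq (2 * sin (INR N * phi))) by lra.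
    assert (0 <= Cmod mu * t ^ N) by (apply Rmult_le_pos; [apply Cmod_ge_0 | exact HtN]).
    nra. }
  assert (T := Cmod_triangle (X + Y) (- X)).
  replace (X + Y + - X)%C with Y in T by ring_C. rewrite Cmod_opp in T. lra.
Qed.

Definition resonant (a Rr t : R) (N : nat) : Prop :=
  exists m, N = S (S m) /\
    2 * Cmod (pa a) * Cmod (Aof a ^ N - 1)%C <= 1 /\
    4 * Cmod (pa a) * Cmod (Aof a ^ N - 1)%C * Rr ^ m * INR N <= t ^ N.

Lemma hom_polar_ge1 a Rr u t phi N : 0 < Rr -> 0 < t -> goursat_sol a (fcoef Rr) u ->
  resonant a Rr t N -> 1 / 2 <= sin (INR N * phi) ->
  1 <= Cmod (hom u N (t * cos phi) (t * sin phi)).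
Proof.
  intros HR Ht Hu [m [-> [HpD HtN]]] Hsin.
  destruct (fact_hom_polar_ge a Rr u m t phi HR Ht Hu Hsin) as [M [HM [HMK Hlow]]].
  set (N := S (S m)) in *. set (K := INR (fact m) / (2 * Rr ^ m)) in *.
  set (p := Cmod (pa a)) in *. set (D := Cmod (Aof a ^ N - 1)%C) in *.
  set (h := Cmod (hom u N (t * cos phi) (t * sin phi))) in *.
  assert (HRm : 0 < Rr ^ m) by (apply pow_lt; exact HR).
  assert (HtN0 : 0 <= t ^ N) by (apply pow_le; lra).
  assert (HKN : K * INR N <= M / 2) by (rewrite <- HMK; nra).
  assert (HMt : 2 * INR (fact m) * INR N * INR N <= M * t ^ N).
  { replace (2 * INR (fact m) * INR N * INR N) with (M * (4 * p * D * Rr ^ m * INR N)).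
    - apply Rmult_le_compat_l; [exact HM | exact HtN].
    - transitivity (4 * (M * p * D) * Rr ^ m * INR N); [ring|].
      rewrite HMK. unfold K. field. lra. }
  assert (Hfact : INR (fact N) <= INR (fact m) * INR N * INR N).
  { unfold N. rewrite !fact_simpl, !mult_INR.
    assert (INR (S m) <= INR (S (S m))) by (apply le_INR; lia).
    assert (0 <= INR (S (S m)) * INR (fact m)) by (apply Rmult_le_pos; apply pos_INR).
    nra. }
  assert (HfN : 0 < INR (fact N)) by apply INR_fact_lt_0.
  apply (Rmult_le_reg_l (INR (fact N))); [exact HfN|]. nra.
Qed.

Lemma INR_le_pow2 n : INR n <= 2 ^ n.
Proof.
  induction n as [|n IH]; [simpl; lra|].
  rewrite S_INR. simpl. assert (1 <= 2 ^ n) by (apply pow_R1_Rle; lra). lra.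
Qed.

Lemma half_pow_mul_le c n : 0 <= c <= 1 -> (1 <= n)%nat -> (c / 2) ^ n * INR n <= c.
Proof.
  intros Hc Hn. unfold Rdiv. rewrite Rpow_mult_distr, pow_inv, Rmult_assoc.
  assert (H2n : 0 < 2 ^ n) by (apply pow_lt; lra).
  assert (Hhalf : / 2 ^ n * INR n <= 1).
  { apply (Rmult_le_reg_l (2 ^ n)); [exact H2n|].
    rewrite <- Rmult_assoc, Rinv_r, Rmult_1_r, Rmult_1_l by lra. apply INR_le_pow2. }
  assert (Hcn : c ^ n <= c).
  { destruct n as [|n]; [lia|].
    assert (c ^ n <= 1) by (rewrite <- (pow1 n); apply pow_incr; lra).
    simpl. nra. }
  assert (0 <= / 2 ^ n * INR n).
  { apply Rmult_le_pos; [left; apply Rinv_0_lt_compat; exact H2n | apply pos_INR]. }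
  assert (0 <= c ^ n) by (apply pow_le; lra). nra.
Qed.

Lemma small_defect p Rr t d m : 1 <= p -> 0 < Rr -> 0 < t <= Rr -> 0 <= d ->
  d <= (t / Rr * (Rmin 1 (Rr ^ 2) / (8 * p) / 2)) ^ S (S m) ->
  2 * p * d <= 1 /\ 4 * p * d * Rr ^ m * INR (S (S m)) <= t ^ S (S m).
Proof.
  intros Hp HR Ht Hd Hsmall.
  set (N := S (S m)) in *. set (c := Rmin 1 (Rr ^ 2) / (8 * p)) in *.
  assert (HR2 : 0 < Rr ^ 2) by (apply pow_lt; lra).
  assert (Hc8 : 8 * p * c = Rmin 1 (Rr ^ 2)) by (unfold c; field; lra).
  assert (Hc0 : 0 < c) by (apply Rdiv_lt_0_compat; [apply Rmin_glb_lt|]; lra).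
  assert (Hc1 : 8 * p * c <= 1) by (rewrite Hc8; apply Rmin_l).
  assert (HcR : 8 * p * c <= Rr ^ 2) by (rewrite Hc8; apply Rmin_r).
  assert (Hcn : (c / 2) ^ N * INR N <= c) by (apply half_pow_mul_le; [nra | unfold N; lia]).
  assert (Hs : 0 < t / Rr <= 1).
  { split; [apply Rdiv_lt_0_compat; lra|]. apply (Rdiv_le_1 t Rr HR). lra. }
  assert (HsN : (t / Rr) ^ N * Rr ^ m * Rr ^ 2 = t ^ N).
  { unfold Rdiv. rewrite Rpow_mult_distr, pow_inv, Rmult_assoc, <- pow_add.
    replace (m + 2)%nat with N by (unfold N; lia). field. apply pow_nonzero. lra. }
  assert (Hs0 : 0 <= (t / Rr) ^ N) by (apply pow_le; lra).
  assert (Hs1 : (t / Rr) ^ N <= 1) by (rewrite <- (pow1 N); apply pow_incr; lra).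
  rewrite Rpow_mult_distr in Hsmall.
  assert (HN1 : 1 <= INR N) by (apply (le_INR 1); unfold N; lia).
  assert (Hc2 : 0 <= (c / 2) ^ N) by (apply pow_le; lra).
  assert (Hdc : d <= c).
  { assert ((t / Rr) ^ N * (c / 2) ^ N <= (c / 2) ^ N * INR N) by nra. lra. }
  split; [nra|].
  assert (HRm : 0 < Rr ^ m) by (apply pow_lt; lra).
  assert (Hd4 : d * INR N <= (t / Rr) ^ N * c).
  { apply Rle_trans with ((t / Rr) ^ N * (c / 2) ^ N * INR N); [apply Rmult_le_compat_r; lra|].
    rewrite Rmult_assoc. apply Rmult_le_compat_l; assumption. }
  replace (4 * p * d * Rr ^ m * INR N) with (4 * p * Rr ^ m * (d * INR N)) by ring.
  rewrite <- HsN.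
  apply Rle_trans with (4 * p * Rr ^ m * ((t / Rr) ^ N * c)); [apply Rmult_le_compat_l; nra|].
  assert (0 <= (t / Rr) ^ N * Rr ^ m) by nra. nra.
Qed.

(** * Choice of the angle *)

Lemma nested_intervals (l r : nat -> R) :
  (forall k, l k <= l (S k)) -> (forall k, r (S k) <= r k) -> (forall k, l k <= r k) ->
  exists phi, forall k, l k <= phi <= r k.
Proof.
  intros Hl Hr Hlr.
  assert (Hmono : forall j k, (j <= k)%nat -> l j <= l k /\ r k <= r j).
  { induction 1 as [|k _ IH]; [lra|]. specialize (Hl k). specialize (Hr k). lra. }
  assert (Hlr' : forall j k, l j <= r k).
  { intros j k. specialize (Hlr j) as Hj. specialize (Hlr k) as Hk.
    destruct (Nat.le_ge_cases j k) as [H|H]; destruct (Hmono _ _ H); lra. }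
  destruct (completeness (fun x => exists k, x = l k)) as [phi [Hub Hlub]].
  - exists (r 0%nat). intros x [k ->]. apply Hlr'.
  - exists (l 0%nat), 0%nat. reflexivity.
  - exists phi. intros k. split.
    + apply Hub. exists k. reflexivity.
    + apply Hlub. intros x [j ->]. apply Hlr'.
Qed.

Definition arc_width (n : nat) : R := 2 * PI / 3 / INR n.

Lemma arc_width_pos n : (0 < n)%nat -> 0 < arc_width n.
Proof.
  intros Hn. assert (HP := PI_RGT_0). assert (0 < INR n) by (apply lt_0_INR; exact Hn).
  unfold arc_width. apply Rdiv_lt_0_compat; lra.
Qed.

Section Arcs.

Variable pick : nat -> nat.
Hypothesis pick_ge : forall K, (K <= pick K)%nat.

(* Arcs [[l, l + arc_width n]] with [n l = pi/6 mod 2 pi], so that [sin (n phi) >= 1/2] on them;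
   as [n' >= 5 n + 1], the next arc fits inside the previous one. *)
Definition arc_next (p : R * nat) : R * nat :=
  let (l, n) := p in
  let n' := pick (5 * n + 1) in
  ((2 * PI * INR (Z.to_nat (up (INR n' * l / (2 * PI)))) + PI / 6) / INR n', n').

Fixpoint arc (k : nat) : R * nat :=
  arc_next (match k with O => (0, 0%nat) | S k' => arc k' end).

Lemma arc_next_spec p : 0 <= fst p ->
  (5 * snd p + 1 <= snd (arc_next p))%nat /\ (exists K, snd (arc_next p) = pick K) /\
  0 <= fst (arc_next p) /\
  exists j : nat, INR (snd (arc_next p)) * fst (arc_next p) = 2 * PI * INR j + PI / 6.
Proof.
  destruct p as [l n]. intros Hl. unfold arc_next. cbv beta iota zeta. cbn [fst snd] in *.
  set (n' := pick (5 * n + 1)). set (y := INR n' * l / (2 * PI)).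
  assert (HP := PI_RGT_0).
  assert (Hn' : 0 < INR n') by (apply lt_0_INR; specialize (pick_ge (5 * n + 1)); lia).
  assert (Hj : 0 <= INR (Z.to_nat (up y))) by apply pos_INR.
  split; [apply pick_ge|]. split; [exists (5 * n + 1)%nat; reflexivity|]. split.
  - apply Rdiv_le_0_compat; nra.
  - exists (Z.to_nat (up y)). field. lra.
Qed.

Lemma arc_next_nested p : (1 <= snd p)%nat -> 0 <= fst p ->
  fst p <= fst (arc_next p) /\
  fst (arc_next p) + arc_width (snd (arc_next p)) <= fst p + arc_width (snd p).
Proof.
  destruct p as [l n]. intros Hn Hl. unfold arc_next. cbv beta iota zeta. cbn [fst snd] in *.
  set (n' := pick (5 * n + 1)). set (y := INR n' * l / (2 * PI)).
  assert (HP := PI_RGT_0).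
  assert (Hn5 : 5 * INR n + 1 <= INR n').
  { replace (5 * INR n + 1) with (INR (5 * n + 1)) by (rewrite plus_INR, mult_INR; simpl; ring).
    apply le_INR, pick_ge. }
  assert (HnR : 1 <= INR n) by (apply (le_INR 1); exact Hn).
  assert (Hy : 0 <= y) by (apply Rdiv_le_0_compat; nra).
  destruct (archimed y) as [Hup1 Hup2].
  rewrite INR_IZR_INZ, Z2Nat.id by (apply le_IZR; lra).
  assert (Ey : INR n' * l = 2 * PI * y) by (unfold y; field; lra).
  unfold arc_width. split.
  - apply (Rmult_le_reg_l (INR n')); [lra|].
    replace (INR n' * ((2 * PI * IZR (up y) + PI / 6) / INR n'))
      with (2 * PI * IZR (up y) + PI / 6) by (field; lra). nra.
  - apply (Rmult_le_reg_l (INR n')); [lra|].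
    replace (INR n' * ((2 * PI * IZR (up y) + PI / 6) / INR n' + 2 * PI / 3 / INR n'))
      with (2 * PI * IZR (up y) + 5 * PI / 6) by (field; lra).
    replace (INR n' * (l + 2 * PI / 3 / INR n))
      with (2 * PI * y + 2 * PI / 3 * (INR n' / INR n)) by (rewrite <- Ey; field; lra).
    assert (5 <= INR n' / INR n) by (apply Rle_div_r; lra). nra.
Qed.

Lemma arc_spec k :
  (k < snd (arc k))%nat /\ (exists K, snd (arc k) = pick K) /\ 0 <= fst (arc k) /\
  exists j : nat, INR (snd (arc k)) * fst (arc k) = 2 * PI * INR j + PI / 6.
Proof.
  induction k as [|k IH].
  - change (arc 0) with (arc_next (0, 0%nat)).
    destruct (arc_next_spec (0, 0%nat) (Rle_refl 0)) as (H1 & H2). cbn [snd] in H1.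
    split; [lia | exact H2].
  - destruct IH as (Hk & _ & Hl & _). change (arc (S k)) with (arc_next (arc k)).
    destruct (arc_next_spec (arc k) Hl) as (H1 & H2). split; [lia | exact H2].
Qed.

Lemma arc_nested k :
  fst (arc k) <= fst (arc (S k)) /\
  fst (arc (S k)) + arc_width (snd (arc (S k))) <= fst (arc k) + arc_width (snd (arc k)).
Proof.
  destruct (arc_spec k) as (Hk & _ & Hl & _).
  apply arc_next_nested; [lia | exact Hl].
Qed.

Lemma angle_in_all_arcs : exists phi, forall k,
  fst (arc k) <= phi <= fst (arc k) + arc_width (snd (arc k)).
Proof.
  apply nested_intervals; intros k; try apply arc_nested.
  destruct (arc_spec k) as (Hk & _). generalize (arc_width_pos (snd (arc k)) ltac:(lia)). lra.
Qed.

End Arcs.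

Lemma sin_ge_half th : PI / 6 <= th <= 5 * PI / 6 -> 1 / 2 <= sin th.
Proof.
  intros [H1 H2]. rewrite <- sin_PI6. assert (HP := PI_RGT_0).
  destruct (Rle_dec th (PI / 2)).
  - apply sin_incr_1; lra.
  - rewrite <- (sin_PI_x th). apply sin_incr_1; lra.
Qed.

Lemma angle_selection (good : nat -> Prop) :
  (forall K, exists N, (K <= N)%nat /\ good N) ->
  exists phi, forall K, exists N, (K <= N)%nat /\ good N /\ 1 / 2 <= sin (INR N * phi).
Proof.
  intros Hgood. destruct (choice (fun K N => (K <= N)%nat /\ good N) Hgood) as [pick Hpick].
  assert (pick_ge : forall K, (K <= pick K)%nat) by (intros K; apply Hpick).
  destruct (angle_in_all_arcs pick pick_ge) as [phi Hphi].
  exists phi. intros K. exists (snd (arc pick K)).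
  destruct (arc_spec pick pick_ge K) as (HK & [K' HK'] & _ & [j Hj]).
  split; [lia|]. split; [rewrite HK'; apply Hpick|].
  destruct (Hphi K) as [Hlo Hhi]. unfold arc_width in Hhi.
  set (N := snd (arc pick K)) in *. set (l := fst (arc pick K)) in *.
  assert (HN : 0 < INR N) by (apply lt_0_INR; lia).
  assert (H1 : INR N * l <= INR N * phi) by (apply Rmult_le_compat_l; lra).
  assert (H2 : INR N * phi <= INR N * l + 2 * PI / 3).
  { replace (INR N * l + 2 * PI / 3) with (INR N * (l + 2 * PI / 3 / INR N)) by (field; lra).
    apply Rmult_le_compat_l; lra. }
  replace (INR N * phi) with (INR N * phi - 2 * INR j * PI + 2 * INR j * PI) by ring.
  rewrite sin_period. apply sin_ge_half. lra.
Qed.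

(** * Divergence *)

Lemma ex_series_C_eventually_lt1 (a : nat -> CC) :
  ex_series a -> exists N0, forall n, (N0 <= n)%nat -> Cmod (a n) < 1.
Proof.
  intros Ha. apply (@Cauchy_ex_series C_AbsRing C_CompleteNormedModule) in Ha.
  destruct (Ha (mkposreal 1 Rlt_0_1)) as [N0 HN0]. exists N0. intros n Hn.
  specialize (HN0 n n Hn Hn). rewrite sum_n_n in HN0. exact HN0.
Qed.

Lemma liminf_root_zero_small (d : nat -> R) :
  (forall n, (0 < n)%nat -> 0 < d n) ->
  LimInf_seq (fun n => Rpower (d n) (/ INR n)) = Finite 0 ->
  forall delta, 0 < delta -> forall K, exists n, (K <= n)%nat /\ d n <= delta ^ n.
Proof.
  intros Hd Hlim delta Hdelta K.
  destruct (ex_LimInf_seq (fun n => Rpower (d n) (/ INR n))) as [l Hl].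
  rewrite (is_LimInf_seq_unique _ _ Hl) in Hlim. subst l.
  destruct (proj1 (Hl (mkposreal delta Hdelta)) (Nat.max K 1)) as [n [Hn Hsmall]].
  simpl in Hsmall. exists n. split; [lia|].
  assert (Hn0 : (0 < n)%nat) by lia.
  replace (d n) with (Rpower (d n) (/ INR n) ^ n).
  - apply pow_incr. split; [left; apply exp_pos | lra].
  - assert (HnR : INR n <> 0) by (apply not_0_INR; lia).
    rewrite <- Rpower_pow by apply exp_pos.
    rewrite Rpower_mult, Rinv_l, Rpower_1 by (exact HnR || exact (Hd n Hn0)). reflexivity.
Qed.

Lemma resonant_infinitely_often a Rr t :
  ~ root_of_unity (Aof a) ->
  LimInf_seq (fun m => Rpower (Cmod (pow_n (Aof a) m - RtoC 1)%C) (/ INR m)) = Finite 0 ->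
  0 < Rr -> 0 < t <= Rr ->
  forall K, exists N, (K <= N)%nat /\ resonant a Rr t N.
Proof.
  intros hA hlim hR Ht K.
  set (p := Cmod (pa a)). assert (Hp : 1 <= p) by apply Cmod_pa_ge1.
  set (delta := t / Rr * (Rmin 1 (Rr ^ 2) / (8 * p) / 2)).
  assert (Hdelta : 0 < delta).
  { assert (0 < Rmin 1 (Rr ^ 2)) by (apply Rmin_glb_lt; [lra | apply pow_lt; lra]).
    unfold delta. apply Rmult_lt_0_compat; [apply Rdiv_lt_0_compat; lra|].
    apply Rdiv_lt_0_compat; [apply Rdiv_lt_0_compat|]; lra. }
  assert (HD : forall n, (0 < n)%nat -> 0 < Cmod (pow_n (Aof a) n - RtoC 1)%C).
  { intros n Hn. apply Cmod_gt_0. rewrite pow_n_Cpow. apply Aof_pow_sub1_neq0; assumption. }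
  destruct (liminf_root_zero_small _ HD hlim delta Hdelta (Nat.max K 2)) as [n [Hn Hsmall]].
  exists n. split; [lia|]. destruct n as [|[|m]]; [lia | lia|].
  rewrite pow_n_Cpow in Hsmall. exists m. split; [reflexivity|].
  apply small_defect; [exact Hp | exact hR | exact Ht | apply Cmod_ge_0 | exact Hsmall].
Qed.

Lemma goursat_sol_diverges a Rr u :
  ~ root_of_unity (Aof a) ->
  LimInf_seq (fun m => Rpower (Cmod (pow_n (Aof a) m - RtoC 1)%C) (/ INR m)) = Finite 0 ->
  0 < Rr -> goursat_sol a (fcoef Rr) u -> ~ converges_near0 u.
Proof.
  intros hA hlim hR Hu [eps [Heps Hconv]].
  set (t := Rmin eps Rr / 2).
  assert (Ht : 0 < t /\ t < eps /\ t <= Rr).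
  { assert (0 < Rmin eps Rr) by (apply Rmin_glb_lt; lra).
    generalize (Rmin_l eps Rr) (Rmin_r eps Rr). unfold t. lra. }
  destruct (angle_selection (resonant a Rr t)
              (resonant_infinitely_often a Rr t hA hlim hR ltac:(lra))) as [phi Hphi].
  assert (Hxy : (t * cos phi) ^ 2 + (t * sin phi) ^ 2 < eps ^ 2).
  { replace ((t * cos phi) ^ 2 + (t * sin phi) ^ 2) with (t ^ 2)
      by (rewrite <- (Rmult_1_r (t ^ 2)), <- (sin2_cos2 phi); unfold Rsqr; ring).
    nra. }
  destruct (ex_series_C_eventually_lt1 _ (Hconv _ _ Hxy)) as [N0 HN0].
  destruct (Hphi N0) as [N [HN [Hres Hsin]]].
  assert (Hge := hom_polar_ge1 a Rr u t phi N hR ltac:(lra) Hu Hres Hsin).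
  specialize (HN0 N HN). lra.
Qed.

Theorem mainTheorem10 (a Rr : R) (ha : 0 <= a)
  (hA : ~ root_of_unity (Aof a))
  (hlim : LimInf_seq (fun m => Rpower (Cmod (pow_n (Aof a) m - RtoC 1)%C) (/ INR m))
          = Finite 0)
  (hR : 0 < Rr) :
  hom_series_unif_on_ball Rr (fcoef Rr) /\
  (exists u : fps, goursat_sol a (fcoef Rr) u) /\
  (forall u : fps, goursat_sol a (fcoef Rr) u -> ~ converges_near0 u).
Proof.
  split; [|split].
  - apply fcoef_unif_on_ball. exact hR.
  - exists (u_sol a Rr). apply goursat_sol_u_sol; [lra | exact hA].
  - intros u. apply goursat_sol_diverges; assumption.
Qed.
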